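(* Let $X$ be a random variable on a probability space with $X \ge 0$ almost surely and $X \in L^2$ (i.e. $E X^2 < \infty$). Let $0 < r < s \le 1$. Then $$\operatorname{Var}(X^r)^{1/r} \le \operatorname{Var}(X^s)^{1/s}.$$
   Context: $\operatorname{Var}(Y) = E(Y^2) - (EY)^2$ denotes the variance of a square-integrable random variable $Y$. Statements such as $X\ge 0$ are meant almost surely. *)

From HB Require Import structures.
From mathcomp Require Import all_boot all_order all_algebra.
From mathcomp Require Import all_classical all_reals all_analysis.

(* With [p = s / r >= 1] and [A = X `^ r] we have [X `^ s = A `^ p].  The
   variance minimises the mean squared deviation, so [Var A <= E (A - c)^2] for
   [c = m `^ p^-1], [m = E (A `^ p)].  The elementary inequality
   [|a - b| `^ p <= |a `^ p - b `^ p|] (superadditivity of [t `^ p]) bounds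
   [(A - c)^2] by [((A `^ p - m)^2) `^ p^-1], and Jensen's inequality for the
   concave map [t `^ p^-1] bounds its expectation by [Var (A `^ p) `^ p^-1].
   Hence [Var (X `^ r) <= Var (X `^ s) `^ (r / s)]; raise both sides to [r^-1]. *)

From HB Require Import structures.
From mathcomp Require Import all_boot all_order all_algebra.
From mathcomp Require Import all_classical all_reals all_analysis.
From mathcomp Require Import measurable_realfun.
Import Order.TTheory GRing.Theory Num.Theory.
Local Open Scope ring_scope.

Section powR_inequalities.
Context {R : realType}.
Implicit Types a u v x y p r : R.

Lemma powR_superadd x y p : 0 <= x -> 0 <= y -> 1 <= p ->
  x `^ p + y `^ p <= (x + y) `^ p.
Proof.
move=> x0 y0 p1; have p0 : 0 < p by rewrite (lt_le_trans ltr01).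
have xy0 : 0 <= x + y by rewrite addr_ge0.
have p10 : 0 <= p - 1 by rewrite subr_ge0.
rewrite -(mulr_powRB1 x0 p0) -(mulr_powRB1 y0 p0) -(mulr_powRB1 xy0 p0) mulrDl.
by rewrite lerD// ler_wpM2l// ge0_ler_powR// ?nnegrE// ?lerDl ?lerDr.
Qed.

Lemma powR_dist_le u v p : 0 <= u -> 0 <= v -> 1 <= p ->
  `|u - v| `^ p <= `|u `^ p - v `^ p|.
Proof.
move=> u0 v0 p1; have p0 : 0 <= p by rewrite (le_trans ler01).
wlog vu : u v u0 v0 / v <= u.
  move=> H; have [vu|/ltW uv] := leP v u; first exact: H.
  by rewrite distrC [X in _ <= X]distrC H.
have vpup : v `^ p <= u `^ p by rewrite ge0_ler_powR.
rewrite !ger0_norm ?subr_ge0// lerBrDr.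
by have := @powR_superadd (u - v) v p; rewrite subrK subr_ge0; apply.
Qed.

Lemma sqrB_le_powR_sqrB u v p : 0 <= u -> 0 <= v -> 1 <= p ->
  (u - v) ^+ 2 <= ((u `^ p - v `^ p) ^+ 2) `^ p^-1.
Proof.
move=> u0 v0 p1; have p0 : 0 < p by rewrite (lt_le_trans ltr01).
rewrite -(real_normK (num_real (u - v))) -(real_normK (num_real (u `^ p - v `^ p))).
rewrite -!powR_mulrn ?normr_ge0// -powRrM mulrC powRrM.
apply: ge0_ler_powR; rewrite ?nnegrE ?powR_ge0 ?normr_ge0//.
rewrite -[leLHS](powRr1 (normr_ge0 _)) -(mulfV (lt0r_neq0 p0)) powRrM.
apply: ge0_ler_powR; rewrite ?nnegrE ?powR_ge0 ?normr_ge0 ?invr_ge0 ?(ltW p0)//.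
exact: powR_dist_le.
Qed.

Lemma sqr_powR_le1Dsqr a r : 0 <= r -> r <= 1 -> (a `^ r) ^+ 2 <= 1 + a ^+ 2.
Proof.
move=> r0 r1; have [a1|a1] := leP a 1.
  have ar1 : a `^ r <= 1.
    have [a0|a0] := ltP 0 a; first by rewrite -(powRr0 a) ger_powR// a0 a1.
    rewrite /powR; case: ifP => _; first by case: (r == 0); rewrite ?ler01.
    by rewrite ln0// mulr0 expR0.
  by rewrite (le_trans (exprn_ile1 _ (powR_ge0 _ _) ar1))// lerDl sqr_ge0.
apply: (le_trans _ (_ : a ^+ 2 <= 1 + a ^+ 2)); last by rewrite lerDr.
by rewrite lerXn2r// ?nnegrE ?powR_ge0 ?(le_trans ler01 (ltW a1))// ler1_powR// ltW.
Qed.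

End powR_inequalities.

Section probability_powR.
Context d (T : measurableType d) (R : realType) (P : probability T R).
Local Open Scope ereal_scope.

Lemma Lfun2_powR (mu : {finite_measure set T -> \bar R}) (X : T -> R) (r : R) :
  X \in Lfun mu 2%:E -> (0 <= r <= 1)%R -> (fun w => X w `^ r)%R \in Lfun mu 2%:E.
Proof.
move=> X2 /andP[r0 r1]; have := X2; rewrite !inE => /andP[]; rewrite !inE/= => mX _.
have mXr : measurable_fun setT (fun w => X w `^ r)%R.
  exact: measurableT_comp (measurable_powR _) mX.
apply/andP; split; first by rewrite inE.
rewrite inE /= /finite_norm unlock; apply: poweR_lty.
have /integrableP[mD] := integrableD measurableT
  (finite_measure_integrable_cst mu 1%R measurableT) (Lfun2_integrable_sqr X2).
apply: le_lt_trans; apply: ge0_le_integral => //.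
- by move=> w _; apply: poweR_ge0.
- under eq_fun do rewrite /comp abse_EFin poweR_EFin.
  by apply/measurable_EFinP; apply: measurableT_comp (measurable_powR _) _; exact: measurableT_comp.
- exact: measurableT_comp _ mD.
- move=> w _; rewrite /comp !abse_EFin poweR_EFin lee_fin.
  rewrite ger0_norm ?powR_ge0// powR_mulrn ?powR_ge0// ger0_norm ?addr_ge0 ?sqr_ge0//.
  exact: sqr_powR_le1Dsqr.
Qed.

(* Hoelder's inequality against [cst 1] with exponents [q^-1] and [(1 - q)^-1]. *)
Lemma expectation_powR_le (g : T -> R) (q : R) :
  measurable_fun setT g -> (forall w, (0 <= g w)%R) -> (0 < q <= 1)%R ->
  'E_P[fun w => (g w `^ q)%R] <= 'E_P[g] `^ q.
Proof.
move=> mg g0 /andP[q0]; rewrite le_eqVlt => /orP[/eqP->|q1].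
  under eq_fun do rewrite powRr1//.
  by rewrite poweRe1// expectation_ge0.
have mgq : measurable_fun setT (fun w => (g w `^ q)%R).
  exact: measurableT_comp (measurable_powR _) mg.
have Q0 : (0 < (1 - q)^-1)%R by rewrite invr_gt0 subr_gt0.
have conj : (q^-1^-1 + (1 - q)^-1^-1 = 1)%R by rewrite !invrK addrC subrK.
have Qi0 : (0 < q^-1)%R by rewrite invr_gt0.
have := hoelder P mgq (@measurable_cst _ _ T R setT 1%R) Qi0 Q0 conj.
rewrite Lnorm1 Lnorm_cst1 (_ : P setT `^ _ = 1) ?mule1; last first.
  by rewrite -[RHS](poweR1r ((1 - q)^-1^-1)); congr (_ `^ _); exact: probability_setT.
have -> : 'N[P]_(q^-1)%:E[EFin \o (fun w => g w `^ q)%R] = 'E_P[g] `^ q.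
  rewrite unlock invrK expectation.unlock; congr (_ `^ _); apply: eq_integral => w _.
  by rewrite /comp abse_EFin poweR_EFin ger0_norm ?powR_ge0// -powRrM mulfV ?gt_eqF// powRr1.
apply: le_trans; rewrite le_eqVlt expectation.unlock; apply/orP; left.
by apply/eqP/eq_integral => w _; rewrite /comp /= mulr1 ger0_norm ?powR_ge0.
Qed.

Lemma variance_le_sqrB_cst (X : T -> R) (c : R) : X \in Lfun P 2%:E ->
  'V_P[X] <= 'E_P[(X \- cst c) ^+ 2].
Proof.
move=> X2; have Xc2 : (X \- cst c)%R \in Lfun P 2%:E.
  by apply: rpredB; [rewrite lee1n | move=> ? | move=> ?; exact: Lfun_cst].
rewrite -(varianceB_cst_r c X2) varianceE// -[leRHS]sube0.
by apply: leeB => //; exact: sqre_ge0.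
Qed.

Lemma variance_le_variance_powR (A : T -> R) (p : R) :
  A \in Lfun P 2%:E -> (forall w, 0 <= A w)%R -> (1 <= p)%R ->
  'V_P[A] <= 'V_P[fun w => A w `^ p]%R `^ p^-1.
Proof.
move=> A2 A0 p1; have p0 : (0 < p)%R by rewrite (lt_le_trans ltr01).
set B := (fun w => A w `^ p)%R; set m := fine 'E_P[B]; set v := (m `^ p^-1)%R.
have m0 : (0 <= m)%R by apply/fine_ge0/expectation_ge0 => w; exact: powR_ge0.
have mA : measurable_fun setT A by move: A2; rewrite inE => /andP[]; rewrite inE.
have mB : measurable_fun setT B by exact: measurableT_comp (measurable_powR _) mA.
have mB2 : measurable_fun setT (fun w => (B w - m) ^+ 2)%R.
  exact: measurable_funX (measurable_funB mB (measurable_cst m)).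
have VB : 'V_P[B] = 'E_P[fun w => (B w - m) ^+ 2]%R.
  by rewrite /variance covariance.unlock; under eq_fun do rewrite expr2.
apply: le_trans (variance_le_sqrB_cst _ v A2) _.
have p_inv01 : (0 < p^-1 <= 1)%R by rewrite invr_gt0 p0 invf_le1.
rewrite VB; apply: le_trans (expectation_powR_le _ _ mB2 (fun w => sqr_ge0 _) p_inv01).
rewrite expectation.unlock; apply: ge0_le_integral => //.
- by move=> w _; rewrite lee_fin sqr_ge0.
- by apply/measurable_EFinP; rewrite expr2; apply: measurable_funM; exact: measurable_funB mA (measurable_cst v).
- by apply/measurable_EFinP; exact: measurableT_comp (measurable_powR _) mB2.
move=> w _; rewrite lee_fin /B (_ : m = v `^ p)%R; last by rewrite -powRrM mulVf ?gt_eqF// powRr1.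
exact: sqrB_le_powR_sqrB (powR_ge0 _ _) p1.
Qed.

End probability_powR.

Theorem theorem2p1 (d : measure_display) (T : measurableType d) (R : realType)
  (P : probability T R) (X : T -> R) (r s : R) :
  X \in Lfun P 2%:E ->
  {ae P, forall w, 0 <= X w} ->
  0 < r -> r < s -> s <= 1 ->
  (('V_P[fun w => (X w `^ r)%R]) `^ (r^-1)%R <= ('V_P[fun w => (X w `^ s)%R]) `^ (s^-1)%R)%E.
Proof.
move=> X2 _ r0 rs s1; have s0 : 0 < s := lt_trans r0 rs.
have Xr2 : (fun w => X w `^ r) \in Lfun P 2%:E.
  by apply: Lfun2_powR => //; rewrite (ltW r0) (le_trans (ltW rs) s1).
have Xs : (fun w => (X w `^ r) `^ (s / r)) = (fun w => X w `^ s).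
  by apply/funext => w; rewrite -powRrM mulrCA divff ?gt_eqF// mulr1.
have Vrs : ('V_P[fun w => (X w `^ r)%R] <= 'V_P[fun w => (X w `^ s)%R] `^ (r / s))%E.
  rewrite -[r / s]invf_div -Xs; apply: variance_le_variance_powR => // [w|].
  - exact: powR_ge0.
  - by rewrite ler_pdivlMr// mul1r ltW.
apply: le_trans (gt0_ler_poweR _ _ _ Vrs) _.
- by rewrite invr_ge0 ltW.
- by rewrite in_itv /= variance_ge0 leey.
- by rewrite in_itv /= poweR_ge0 leey.
by rewrite -poweRrM mulrAC divff ?mul1r// gt_eqF.
Qed.
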